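(* Let $\mathcal A,\mathcal B$ be typoids such that the product typoid $\mathcal A\times\mathcal B$ is univalent. If there is a term $b:B$, then $\mathcal A$ is univalent. If there is a term $a:A$, then $\mathcal B$ is univalent.
   Context: We work in intensional Martin-Löf type theory with a universe $\mathcal U$ (univalent type theory as in the HoTT book). A (2-)typoid $\mathcal A=(A,\simeq_{\mathcal A},\mathrm{eqv}_{\mathcal A},\ast_{\mathcal A},{}^{-1_{\mathcal A}},\cong_{\mathcal A})$ consists of the following data: - a type $A:\mathcal U$; - a type family $\simeq_{\mathcal A}:A\to A\to\mathcal U$; - a dependent function $\mathrm{eqv}:\prod_{x:A}x\simeq x$, whose values are written $\mathrm{eqv}_x$; - a composition $\ast:\prod_{x,y,z:A}(x\simeq y)\to(y\simeq z)\to(x\simeq z)$, written infix; - an inversion ${}^{-1}:\prod_{x,y:A}(x\simeq y)\to(y\simeq x)$; - a family $\cong:\prod_{x,y:A}(x\simeq y)\to(x\simeq y)\to\mathcal U$ which, for each $x,y$, is an equivalence relation on $x\simeq y$, with reflexivity, symmetry and transitivity witnessed by terms. These are required to satisfy the following. For all $x,y,z,w:A$, $e,e_1,d_1:x\simeq y$, $e_2,d_2:y\simeq z$ and $e_3:z\simeq w$, there are terms of the types: - (Typ1) $\mathrm{eqv}_x\ast e\cong e$ and $e\ast\mathrm{eqv}_y\cong e$; - (Typ2) $e\ast e^{-1}\cong\mathrm{eqv}_x$ and $e^{-1}\ast e\cong\mathrm{eqv}_y$; - (Typ3) $(e_1\ast e_2)\ast e_3\cong e_1\ast(e_2\ast e_3)$;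 - (Typ4) $(e_1\cong d_1)\to(e_2\cong d_2)\to(e_1\ast e_2\cong d_1\ast d_2)$. Subscripts are omitted when clear. If $\mathcal A,\mathcal B$ are typoids, a function $f:A\to B$ is a typoid function from $\mathcal A$ to $\mathcal B$ if there are dependent functions - $\Phi_f:\prod_{x,y:A}(x\simeq_{\mathcal A}y)\to(f(x)\simeq_{\mathcal B}f(y))$, called a 1-associate of $f$, and - $\Phi^2_f:\prod_{x,y:A}\prod_{e,d:x\simeq_{\mathcal A}y}(e\cong_{\mathcal A}d)\to(\Phi_f(x,y,e)\cong_{\mathcal B}\Phi_f(x,y,d))$, called a 2-associate with respect to $\Phi_f$, such that for all $x,y,z:A$, $e_1:x\simeq_{\mathcal A}y$ and $e_2:y\simeq_{\mathcal A}z$ there are terms of the types: - (i) $\Phi_f(x,x,\mathrm{eqv}_x)\cong_{\mathcal B}\mathrm{eqv}_{f(x)}$; - (ii) $\Phi_f(x,z,e_1\ast_{\mathcal A}e_2)\cong_{\mathcal B}\Phi_f(x,y,e_1)\ast_{\mathcal B}\Phi_f(y,z,e_2)$. The function $f$ is strict with respect to $\Phi_f$ if $\Phi_f(x,x,\mathrm{eqv}_x)\equiv\mathrm{eqv}_{f(x)}$ holds judgmentally for every $x:A$. For a typoid $\mathcal A$, the equality typoid $\mathcal A_0$ has underlying type $A$ and: - $x\simeq y:\equiv(x=_Ay)$; - $\mathrm{eqv}_x:\equiv\mathrm{refl}_x$; - $\ast$ is path concatenation and ${}^{-1}$ is path inversion; - $p\cong q:\equiv(p=_{x=_Ay}q)$.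 A typoid $\mathcal A$ is univalent if there are: - (a) a dependent function $\mathrm{IdtoEqv}_{\mathcal A}:\prod_{x,y:A}(x=_Ay)\to(x\simeq_{\mathcal A}y)$ which is a 1-associate (with some 2-associate $\mathrm{IdtoEqv}^2_{\mathcal A}$) making $\mathrm{id}_A$ a typoid function from $\mathcal A_0$ to $\mathcal A$, and with respect to which $\mathrm{id}_A$ is strict, i.e. $\mathrm{IdtoEqv}_{\mathcal A}(x,x,\mathrm{refl}_x)\equiv\mathrm{eqv}_x$; - (b) dependent functions $\mathrm{Ua}_{\mathcal A}:\prod_{x,y:A}(x\simeq_{\mathcal A}y)\to(x=_Ay)$ and $\mathrm{Ua}^2_{\mathcal A}:\prod_{x,y:A}\prod_{e,d:x\simeq_{\mathcal A}y}(e\cong_{\mathcal A}d)\to(\mathrm{Ua}_{\mathcal A}(x,y,e)=\mathrm{Ua}_{\mathcal A}(x,y,d))$, such that for all $x,y:A$, $p:x=_Ay$ and $e:x\simeq_{\mathcal A}y$ there are terms of types $\mathrm{Ua}_{\mathcal A}(x,y,\mathrm{IdtoEqv}_{\mathcal A}(x,y,p))=p$ and $\mathrm{IdtoEqv}_{\mathcal A}(x,y,\mathrm{Ua}_{\mathcal A}(x,y,e))\cong_{\mathcal A}e$. It is strictly univalent if moreover $\mathrm{Ua}_{\mathcal A}(x,x,\mathrm{eqv}_x)\equiv\mathrm{refl}_x$ judgmentally for all $x:A$. Product typoid. Given typoids $\mathcal A,\mathcal B$, define the family $\simeq_{\mathcal A\times\mathcal B}$ on $A\times B$ by product induction, so that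 $(x,y)\simeq_{\mathcal A\times\mathcal B}(x',y')\equiv(x\simeq_{\mathcal A}x')\times(y\simeq_{\mathcal B}y')$. Let $$T:\prod_{z,w:A\times B}(\mathrm{pr}_1z\simeq_{\mathcal A}\mathrm{pr}_1w)\times(\mathrm{pr}_2z\simeq_{\mathcal B}\mathrm{pr}_2w)\to(z\simeq_{\mathcal A\times\mathcal B}w)$$ $$\Upsilon:\prod_{z,w:A\times B}(z\simeq_{\mathcal A\times\mathcal B}w)\to(\mathrm{pr}_1z\simeq_{\mathcal A}\mathrm{pr}_1w)\times(\mathrm{pr}_2z\simeq_{\mathcal B}\mathrm{pr}_2w)$$ be defined by product induction on $z$ and $w$, as the identity functions when $z\equiv(x,y)$ and $w\equiv(x',y')$. Write $T(z,w,e_1,e_2)$ for $T(z,w,(e_1,e_2))$. For $e:z\simeq_{\mathcal A\times\mathcal B}w$ put $e_1:\equiv\mathrm{pr}_1(\Upsilon(z,w,e))$ and $e_2:\equiv\mathrm{pr}_2(\Upsilon(z,w,e))$. The product $\mathcal A\times\mathcal B$ has underlying type $A\times B$ and equivalence $\simeq_{\mathcal A\times\mathcal B}$, with the following operations, for $e,e':z\simeq w$ and $d:w\simeq u$: - $\mathrm{eqv}_z:\equiv T(z,z,\mathrm{eqv}_{\mathrm{pr}_1z},\mathrm{eqv}_{\mathrm{pr}_2z})$; - $e\ast d:\equiv T(z,u,e_1\ast_{\mathcal A}d_1,\,e_2\ast_{\mathcal B}d_2)$; - $e^{-1}:\equiv T(w,z,e_1^{-1_{\mathcal A}},e_2^{-1_{\mathcal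 B}})$; - $e\cong e':\equiv(e_1\cong_{\mathcal A}e'_1)\times(e_2\cong_{\mathcal B}e'_2)$. This $\mathcal A\times\mathcal B$ is a typoid. *)

(* Identity types living in Type (as in MLTT/HoTT), not Rocq's Prop-valued eq. *)
Inductive paths {A : Type} (a : A) : A -> Type := idpath : paths a a.
Arguments idpath {A} a.

Definition concat {A : Type} {x y z : A} (p : paths x y) (q : paths y z) : paths x z :=
  match q in paths _ z return paths x z with idpath _ => p end.
Definition pinv {A : Type} {x y : A} (p : paths x y) : paths y x :=
  match p in paths _ y return paths y x with idpath _ => idpath x end.

Record Typoid : Type := {
  carrier : Type;
  hom : carrier -> carrier -> Type;
  eqv : forall x, hom x x;
  comp : forall x y z, hom x y -> hom y z -> hom x z;
  inv : forall x y, hom x y -> hom y x;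
  cong : forall x y, hom x y -> hom x y -> Type;
  cong_refl : forall x y (e : hom x y), cong x y e e;
  cong_sym : forall x y (e d : hom x y), cong x y e d -> cong x y d e;
  cong_trans : forall x y (e d c : hom x y), cong x y e d -> cong x y d c -> cong x y e c;
  typ1l : forall x y (e : hom x y), cong x y (comp x x y (eqv x) e) e;
  typ1r : forall x y (e : hom x y), cong x y (comp x y y e (eqv y)) e;
  typ2l : forall x y (e : hom x y), cong x x (comp x y x e (inv x y e)) (eqv x);
  typ2r : forall x y (e : hom x y), cong y y (comp y x y (inv x y e) e) (eqv y);
  typ3 : forall x y z w (e1 : hom x y) (e2 : hom y z) (e3 : hom z w),
      cong x w (comp x z w (comp x y z e1 e2) e3) (comp x y w e1 (comp y z w e2 e3));
  typ4 : forall x y z (e1 d1 : hom x y) (e2 d2 : hom y z),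
      cong x y e1 d1 -> cong y z e2 d2 -> cong x z (comp x y z e1 e2) (comp x y z d1 d2)
}.

Arguments hom {t} _ _.
Arguments eqv {t} _.
Arguments comp {t} {x y z} _ _.
Arguments inv {t} {x y} _.
Arguments cong {t} {x y} _ _.

Definition IsTypoidFunction (A B : Typoid) (f : carrier A -> carrier B)
  (Phi : forall x y : carrier A, hom x y -> hom (f x) (f y))
  (Phi2 : forall (x y : carrier A) (e d : hom x y), cong e d -> cong (Phi x y e) (Phi x y d))
  : Type :=
  (forall x : carrier A, cong (Phi x x (eqv x)) (eqv (f x))) *
  (forall (x y z : carrier A) (e1 : hom x y) (e2 : hom y z),
      cong (Phi x z (comp e1 e2)) (comp (Phi x y e1) (Phi y z e2))).

Definition eq_typoid (A : Typoid) : Typoid.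
Proof.
  refine {| carrier := carrier A;
            hom := fun x y => paths x y;
            eqv := fun x => idpath x;
            comp := fun x y z p q => concat p q;
            inv := fun x y p => pinv p;
            cong := fun x y p q => paths p q |}.
  - intros; exact (idpath _).
  - intros x y e d h; destruct h; exact (idpath _).
  - intros x y e d c h1 h2; destruct h2; exact h1.
  - intros x y e; destruct e; exact (idpath _).
  - intros x y e; exact (idpath _).
  - intros x y e; destruct e; exact (idpath _).
  - intros x y e; destruct e; exact (idpath _).
  - intros x y z w e1 e2 e3; destruct e3; exact (idpath _).
  - intros x y z e1 d1 e2 d2 h1 h2; destruct h1, h2; exact (idpath _).
Defined.

(* IdtoEqv, defined by path induction; hence strict: it sends refl_x to eqv_x
   judgmentally (IdtoEqv x x (idpath x) reduces to eqv x). *)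
Definition IdtoEqv (A : Typoid) (x y : carrier A) (p : paths x y) : hom x y :=
  match p in paths _ y return hom x y with idpath _ => eqv x end.

Record Univalent (A : Typoid) : Type := {
  IdtoEqv2 : forall (x y : carrier A) (p q : paths x y),
      paths p q -> cong (IdtoEqv A x y p) (IdtoEqv A x y q);
  IdtoEqv_fun : IsTypoidFunction (eq_typoid A) A (fun x => x) (IdtoEqv A) IdtoEqv2;
  Ua : forall x y : carrier A, hom x y -> paths x y;
  Ua2 : forall (x y : carrier A) (e d : hom x y), cong e d -> paths (Ua x y e) (Ua x y d);
  Ua_IdtoEqv : forall (x y : carrier A) (p : paths x y), paths (Ua x y (IdtoEqv A x y p)) p;
  IdtoEqv_Ua : forall (x y : carrier A) (e : hom x y), cong (IdtoEqv A x y (Ua x y e)) e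
}.

(* Product typoid, following the paper (T and Upsilon by product induction). *)
Definition prod_hom (A B : Typoid) (z w : carrier A * carrier B) : Type :=
  match z, w with (x, y), (x', y') => (hom x x' * hom y y')%type end.

Definition T_ (A B : Typoid) (z w : carrier A * carrier B) :
  (hom (fst z) (fst w) * hom (snd z) (snd w))%type -> prod_hom A B z w :=
  match z, w with (x, y), (x', y') => fun e => e end.

Definition Ups (A B : Typoid) (z w : carrier A * carrier B) :
  prod_hom A B z w -> (hom (fst z) (fst w) * hom (snd z) (snd w))%type :=
  match z, w with (x, y), (x', y') => fun e => e end.

Definition prod_typoid (A B : Typoid) : Typoid.
Proof.
  refine {| carrier := (carrier A * carrier B)%type;
            hom := prod_hom A B;
            eqv := fun z => T_ A B z z (eqv (fst z), eqv (snd z));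
            comp := fun z w u e d =>
              T_ A B z u (comp (fst (Ups A B z w e)) (fst (Ups A B w u d)),
                          comp (snd (Ups A B z w e)) (snd (Ups A B w u d)));
            inv := fun z w e =>
              T_ A B w z (inv (fst (Ups A B z w e)), inv (snd (Ups A B z w e)));
            cong := fun z w e e' =>
              (cong (fst (Ups A B z w e)) (fst (Ups A B z w e')) *
               cong (snd (Ups A B z w e)) (snd (Ups A B z w e')))%type |}.
  - intros [? ?] [? ?] [? ?]; split; apply cong_refl.
  - intros [? ?] [? ?] [? ?] [? ?] [? ?]; split; apply cong_sym; assumption.
  - intros [? ?] [? ?] [? ?] [? ?] [? ?] [? ?] [? ?]; split; eapply cong_trans; eassumption.
  - intros [? ?] [? ?] [? ?]; split; apply typ1l.
  - intros [? ?] [? ?] [? ?]; split; apply typ1r.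
  - intros [? ?] [? ?] [? ?]; split; apply typ2l.
  - intros [? ?] [? ?] [? ?]; split; apply typ2r.
  - intros [? ?] [? ?] [? ?] [? ?] [? ?] [? ?] [? ?]; split; apply typ3.
  - intros [? ?] [? ?] [? ?] [? ?] [? ?] [? ?] [? ?] [? ?] [? ?]; split; apply typ4; assumption.
Defined.


(* Fix a univalent product A x B and a point b : B.  The path map of A is
   obtained by restricting that of A x B to the fibre over b: an equivalence
   e : x ~ x' is sent to the first projection of Ua((x,b),(x',b),(e,eqv_b)).
   The two round-trip laws of A are the first components of those of A x B,
   because IdtoEqv on the product computes componentwise: its first component
   along a path q is IdtoEqv along ap fst q.  The first half of univalence
   (IdtoEqv being a strict typoid function A_0 -> A) holds for every typoid,
   so it is established once and for all; a univalence structure can then be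
   assembled from the path map and its laws alone. *)

Definition ap {X Y : Type} (f : X -> Y) {x y : X} (p : paths x y) : paths (f x) (f y) :=
  match p in paths _ y return paths (f x) (f y) with idpath _ => idpath (f x) end.

Definition transport {X : Type} (P : X -> Type) {x y : X} (p : paths x y) (u : P x) : P y :=
  match p in paths _ y return P y with idpath _ => u end.

Definition IdtoEqv_cong (A : Typoid) (x y : carrier A) (p q : paths x y)
  (h : paths p q) : cong (IdtoEqv A x y p) (IdtoEqv A x y q) :=
  match h in paths _ q return cong (IdtoEqv A x y p) (IdtoEqv A x y q) with
  | idpath _ => cong_refl A x y _ end.

(* In every typoid, IdtoEqv makes the identity a typoid function A_0 -> A:
   it preserves refl strictly and concatenation up to the unit law Typ1. *)
Lemma IdtoEqv_typoid_function (A : Typoid) :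
  IsTypoidFunction (eq_typoid A) A (fun x => x) (IdtoEqv A) (IdtoEqv_cong A).
Proof.
  split.
  - intro x; apply cong_refl.
  - intros x y z p q; destruct q; simpl.
    apply cong_sym, typ1r.
Qed.

Definition univalent_of_Ua (A : Typoid)
  (ua : forall x y : carrier A, hom x y -> paths x y)
  (ua2 : forall (x y : carrier A) (e d : hom x y), cong e d -> paths (ua x y e) (ua x y d))
  (ua_IdtoEqv : forall (x y : carrier A) (p : paths x y), paths (ua x y (IdtoEqv A x y p)) p)
  (IdtoEqv_ua : forall (x y : carrier A) (e : hom x y), cong (IdtoEqv A x y (ua x y e)) e)
  : Univalent A :=
  {| IdtoEqv2 := IdtoEqv_cong A; IdtoEqv_fun := IdtoEqv_typoid_function A;
     Ua := ua; Ua2 := ua2; Ua_IdtoEqv := ua_IdtoEqv; IdtoEqv_Ua := IdtoEqv_ua |}.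

Lemma IdtoEqv_prod_fst (A B : Typoid) (z w : carrier (prod_typoid A B)) (q : paths z w) :
  paths (fst (Ups A B z w (IdtoEqv (prod_typoid A B) z w q)))
        (IdtoEqv A _ _ (ap fst q)).
Proof. destruct q, z; exact (idpath _). Defined.

Lemma IdtoEqv_prod_snd (A B : Typoid) (z w : carrier (prod_typoid A B)) (q : paths z w) :
  paths (snd (Ups A B z w (IdtoEqv (prod_typoid A B) z w q)))
        (IdtoEqv B _ _ (ap snd q)).
Proof. destruct q, z; exact (idpath _). Defined.

Section LeftFactor.
Variables (A B : Typoid) (U : Univalent (prod_typoid A B)) (b : carrier B).

Definition Ua_left (x x' : carrier A) (e : hom x x') : paths x x' :=
  ap fst (Ua _ U (x, b) (x', b) (e, eqv b)).

Lemma Ua_left_cong (x x' : carrier A) (e d : hom x x') :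
  cong e d -> paths (Ua_left x x' e) (Ua_left x x' d).
Proof.
  intro h.
  exact (ap (ap fst) (Ua2 _ U (x, b) (x', b) (e, eqv b) (d, eqv b) (h, cong_refl _ _ _ _))).
Qed.

Lemma Ua_left_IdtoEqv (x x' : carrier A) (p : paths x x') :
  paths (Ua_left x x' (IdtoEqv A x x' p)) p.
Proof.
  destruct p.
  exact (ap (ap fst) (Ua_IdtoEqv _ U (x, b) (x, b) (idpath _))).
Qed.

Lemma IdtoEqv_Ua_left (x x' : carrier A) (e : hom x x') :
  cong (IdtoEqv A x x' (Ua_left x x' e)) e.
Proof.
  destruct (IdtoEqv_Ua _ U (x, b) (x', b) (e, eqv b)) as [first_component _].
  exact (transport (fun t => cong t e)
           (IdtoEqv_prod_fst A B (x, b) (x', b) (Ua _ U (x, b) (x', b) (e, eqv b)))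
           first_component).
Qed.

Definition univalent_left_factor : Univalent A :=
  univalent_of_Ua A Ua_left Ua_left_cong Ua_left_IdtoEqv IdtoEqv_Ua_left.

End LeftFactor.

Section RightFactor.
Variables (A B : Typoid) (U : Univalent (prod_typoid A B)) (a : carrier A).

Definition Ua_right (y y' : carrier B) (e : hom y y') : paths y y' :=
  ap snd (Ua _ U (a, y) (a, y') (eqv a, e)).

Lemma Ua_right_cong (y y' : carrier B) (e d : hom y y') :
  cong e d -> paths (Ua_right y y' e) (Ua_right y y' d).
Proof.
  intro h.
  exact (ap (ap snd) (Ua2 _ U (a, y) (a, y') (eqv a, e) (eqv a, d) (cong_refl _ _ _ _, h))).
Qed.

Lemma Ua_right_IdtoEqv (y y' : carrier B) (p : paths y y') :
  paths (Ua_right y y' (IdtoEqv B y y' p)) p.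
Proof.
  destruct p.
  exact (ap (ap snd) (Ua_IdtoEqv _ U (a, y) (a, y) (idpath _))).
Qed.

Lemma IdtoEqv_Ua_right (y y' : carrier B) (e : hom y y') :
  cong (IdtoEqv B y y' (Ua_right y y' e)) e.
Proof.
  destruct (IdtoEqv_Ua _ U (a, y) (a, y') (eqv a, e)) as [_ second_component].
  exact (transport (fun t => cong t e)
           (IdtoEqv_prod_snd A B (a, y) (a, y') (Ua _ U (a, y) (a, y') (eqv a, e)))
           second_component).
Qed.

Definition univalent_right_factor : Univalent B :=
  univalent_of_Ua B Ua_right Ua_right_cong Ua_right_IdtoEqv IdtoEqv_Ua_right.

End RightFactor.

Theorem mainTheorem15 (A B : Typoid) :
  Univalent (prod_typoid A B) ->
  (carrier B -> Univalent A) * (carrier A -> Univalent B).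
Proof.
  intro U.
  exact (univalent_left_factor A B U, univalent_right_factor A B U).
Qed.
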